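(* The mapping $\Delta$ is a bijection between covered maps and left-connected oriented maps.
   Context: Permutations are composed right to left. A (rooted) map is a triple $M=(H,\sigma,\alpha)$ with $H$ a finite set of half-edges, $\alpha$ a fixed-point-free involution, $\sigma$ a permutation, $\langle\sigma,\alpha\rangle$ transitive on $H$, and a root $r\in H$; maps are considered up to root-preserving relabelling. Cycles of $\sigma$, $\alpha$, $\phi=\sigma\alpha$ are vertices, edges, faces. For $S\subseteq H$ and a permutation $\pi$, $\pi_{|S}$ is the permutation of $S$ obtained by erasing elements not in $S$ from the cycles of $\pi$. A spanned map $(M,S)$ has $S\subseteq H$ stable by $\alpha$; it is a covered map if $(S,\sigma_{|S},\alpha_{|S})$ is a connecting unicellular map ($\sigma_{|S},\alpha_{|S}$ transitive on $S$, $S$ meets every cycle of $\sigma$ — except $S=\emptyset$ is allowed if $M$ has one vertex — and $\sigma_{|S}\alpha_{|S}$ is cyclic). Its motion function $\theta(h)=\sigma\alpha(h)$ for $h\in S$, $\theta(h)=\sigma(h)$ otherwise, is cyclic for covered maps, and the appearance order is $r\prec_S\theta(r)\prec_S\cdots\prec_S\theta^{|H|-1}(r)$. An oriented map is $(M,(I,O))$ with $H=I\uplus O$ and $\alpha(I)=O$. $\Delta(M,S)=(M,(I,O))$ with $I=\{h\in S:\alpha(h)\prec_S h\}\cup\{h\notin S:h\prec_S\alpha(h)\}$, $O=H\setminus I$. Let $h_0=r$ be the root. A left-path is a sequence $h_1,\dots,h_k$ of half-edges of $I$ such that for each $j=1,\dots,k$ there is an integer $q_j>0$ with $h_{j-1}=\sigma^{q_j}(\alpha(h_j))$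 and $\sigma^p(\alpha(h_j))\in O$ for all $p=0,\dots,q_j-1$. The oriented map is left-connected if every $h\in I$ is the last element $h_k$ of some left-path. *)

From mathcomp Require Import all_boot all_fingroup.
Set Implicit Arguments. Unset Strict Implicit. Unset Printing Implicit Defensive.

Section Maps.
Variable H : finType.

(* Transitivity of the group generated by two functions f, g on a set S:
   any two elements of S are linked by a chain of applications of f and g
   (for permutations of a finite set this is transitivity of <f,g>). *)
Definition transitive_on2 (f g : H -> H) (S : {set H}) : Prop :=
  forall x y, x \in S -> y \in S ->
    connect [rel a b | (b == f a) || (b == g a)] x y.

Definition cyclic_on (f : H -> H) (S : {set H}) : Prop :=
  forall x y, x \in S -> y \in S -> fconnect f x y.

Definition is_map (sigma alpha : {perm H}) : Prop :=
  (forall h, alpha h != h) /\ (forall h, alpha (alpha h) = h) /\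
  transitive_on2 sigma alpha [set: H].

(* pi_|S : erase elements not in S from the cycles of pi
   (for h in S, the first iterate pi^k h, k >= 1, lying in S; identity outside S) *)
Definition restr (pi : {perm H}) (S : {set H}) (h : H) : H :=
  if h \in S then
    iter (find (fun k => iter k.+1 pi h \in S) (iota 0 #|H|)).+1 pi h
  else h.

Variables (sigma alpha : {perm H}) (r : H).

Definition spanned (S : {set H}) : Prop := forall h, h \in S -> alpha h \in S.

Definition one_vertex : Prop := forall x y, fconnect sigma x y.

Definition meets_every_vertex (S : {set H}) : Prop :=
  forall h, exists2 h', h' \in S & fconnect sigma h h'.

(* (M,S) is a covered map: (S, sigma_|S, alpha_|S) is a connecting unicellular map *)
Definition covered (S : {set H}) : Prop :=
  [/\ spanned S,
      transitive_on2 (restr sigma S) (restr alpha S) S,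
      (meets_every_vertex S \/ (S = set0 /\ one_vertex)) &
      cyclic_on (fun h => restr sigma S (restr alpha S h)) S].

Definition motion (S : {set H}) (h : H) : H :=
  if h \in S then sigma (alpha h) else sigma h.

Definition prec (S : {set H}) (h h' : H) : bool :=
  findex (motion S) r h < findex (motion S) r h'.

Definition Delta (S : {set H}) : {set H} * {set H} :=
  let I := [set h | if h \in S then prec S (alpha h) h else prec S h (alpha h)] in
  (I, ~: I).

Definition oriented (IO : {set H} * {set H}) : Prop :=
  IO.2 = ~: IO.1 /\ [set alpha x | x in IO.1] = IO.2.

(* s = [:: h_1; ...; h_k] is a left-path (with h_0 = r) *)
Definition left_path (IO : {set H} * {set H}) (s : seq H) : Prop :=
  (forall h, h \in s -> h \in IO.1) /\
  forall j, j < size s ->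
    exists q, 0 < q /\
      iter q sigma (alpha (nth r s j)) = nth r (r :: s) j /\
      forall p, p < q -> iter p sigma (alpha (nth r s j)) \in IO.2.

Definition left_connected (IO : {set H} * {set H}) : Prop :=
  forall h, h \in IO.1 ->
    exists s, [/\ s <> [::], left_path IO s & last r s = h].

End Maps.

From mathcomp Require Import all_boot all_fingroup.
Set Implicit Arguments. Unset Strict Implicit. Unset Printing Implicit Defensive.

(* A spanned set S is covered exactly when the motion function theta_S is a
   single cycle: on S its first return to S is sigma_|S alpha_|S, and off S it
   follows sigma.  Numbering half-edges along this cycle from the root, h lies
   in I iff "h in S" differs from "alpha h comes before h"; hence Delta(M,S) is
   an orientation, and two covered sets with the same image agree step by step
   along their common tour.  From h in I, the sigma-orbit of alpha h runs
   through O, each step strictly increasing the time at which the current edge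
   is completed, until it reaches I or the root: this builds left paths.
   Conversely, an orientation is inverted by walking from the root and putting
   x in S iff "alpha x already visited" agrees with "x in I".  The walk first
   revisits a half-edge at the root, and left-connectivity forces it to have
   visited every half-edge, so the set it produces is covered and maps to the
   given orientation. *)

Section FirstReturn.
Variable H : finType.

Definition is_first_return (f : H -> H) (S : {set H}) (g : H -> H) : Prop :=
  forall h, h \in S -> exists k, [/\ 0 < k, iter k f h \in S,
    (forall j, 0 < j < k -> iter j f h \notin S) & g h = iter k f h].

Lemma restr_first_return (pi : {perm H}) (S : {set H}) :
  is_first_return pi S (restr pi S).
Proof.
move=> h hS; rewrite /restr hS.
set P := fun k => iter k.+1 pi h \in S.
have hasP : has P (iota 0 #|H|).
  apply/hasP; exists (fingraph.order pi h).-1; last first.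
    by rewrite /P orderSpred (iter_order (@perm_inj _ pi)).
  by rewrite mem_iota /= add0n -ltnS orderSpred ltnS max_card.
have find_lt : find P (iota 0 #|H|) < #|H|.
  by rewrite -[ltnRHS](size_iota 0 #|H|) -has_find.
exists (find P (iota 0 #|H|)).+1; split=> //.
  by have := nth_find 0 hasP; rewrite nth_iota // add0n.
case=> // j /andP[_]; rewrite ltnS => lt_j; apply/negP => jS.
have := before_find 0 lt_j; rewrite nth_iota ?add0n ?(ltn_trans lt_j) //.
by rewrite /P jS.
Qed.

Section Connect.
Variables (f g : H -> H) (S : {set H}).
Hypothesis gS : is_first_return f S g.

Lemma first_return_in h : h \in S -> g h \in S /\ fconnect f h (g h).
Proof. by case/gS=> k [_ kS _ ->]; split; last exact: fconnect_iter. Qed.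

Lemma fconnect_first_return_iter m x :
  x \in S -> iter m f x \in S -> fconnect g x (iter m f x).
Proof.
elim/ltn_ind: m x => [[|m]] IHm x xS mS; first exact: connect0.
have [k [k0 kS kmin gx]] := gS xS.
have le_k_m : k <= m.+1.
  by rewrite leqNgt; apply: contraL mS => /(kmin m.+1).
rewrite -(subnK le_k_m) iterD -gx.
apply: connect_trans (fconnect1 g x) (IHm _ _ _ _ _);
  by rewrite ?gx ?ltn_subrL ?k0 // -iterD subnK.
Qed.

Lemma first_return_fconnect x y :
  x \in S -> y \in S -> fconnect g x y = fconnect f x y.
Proof.
move=> xS yS.
have iter_g n : iter n g x \in S /\ fconnect f x (iter n g x).
  elim: n => [|n [nS fxn]]; first by rewrite connect0.
  by have [gnS fgn] := first_return_in nS; rewrite iterS (connect_trans fxn).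
apply/idP/idP => [/iter_findex <-|fxy]; first by case: (iter_g (findex g x y)).
by rewrite -(iter_findex fxy) fconnect_first_return_iter ?iter_findex.
Qed.

End Connect.

Lemma iter_first_entry (f g : H -> H) (S : {set H}) :
  (forall x, x \notin S -> f x = g x) -> forall i a, iter i f a \in S ->
  exists j, iter j f a \in S /\ iter j g a = iter j f a.
Proof.
move=> fg; elim=> [|i IHi] a; first by exists 0.
have [aS _|aS] := boolP (a \in S); first by exists 0.
rewrite iterSr => /IHi [j [jS Ej]]; exists j.+1.
by rewrite !iterSr -fg.
Qed.

End FirstReturn.

Section Motion.
Variables (H : finType) (sigma alpha : {perm H}) (r : H).
Hypothesis alphaK : involutive alpha.
Implicit Types (S : {set H}) (h x y : H).
Local Notation theta := (motion sigma alpha).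
Local Notation phi_restr S := (fun h => restr sigma S (restr alpha S h)).

Lemma mem_alpha_spanned S x : spanned alpha S -> (alpha x \in S) = (x \in S).
Proof. by move=> sS; apply/idP/idP => [/sS|/sS //]; rewrite alphaK. Qed.

Lemma motion_in S x : x \in S -> theta S x = sigma (alpha x).
Proof. by rewrite /motion => ->. Qed.

Lemma motion_notin S x : x \notin S -> theta S x = sigma x.
Proof. by rewrite /motion => /negbTE ->. Qed.

Lemma motion_inj S : spanned alpha S -> injective (theta S).
Proof.
move=> sS x y; rewrite /motion.
case: ifP => xS; case: ifP => yS /perm_inj; first exact: perm_inj.
- by move=> exy; move: yS; rewrite -exy mem_alpha_spanned ?xS.
- by move=> exy; move: xS; rewrite exy mem_alpha_spanned ?yS.
- by [].
Qed.

Lemma restr_alpha_in S h :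
  spanned alpha S -> h \in S -> restr alpha S h = alpha h.
Proof.
move=> sS hS; have [k [k0 _ kmin ->]] := restr_first_return alpha hS.
case: k k0 kmin => [|[|k]] // _ kmin.
by have := kmin 1 isT; rewrite /= mem_alpha_spanned // hS.
Qed.

Lemma motion_first_return S :
  spanned alpha S -> is_first_return (theta S) S (phi_restr S).
Proof.
move=> sS h hS; rewrite /= restr_alpha_in //.
have ahS : alpha h \in S by rewrite mem_alpha_spanned.
have [k [k0 kS kmin ->]] := restr_first_return sigma ahS.
have iter_motion j : 0 < j <= k -> iter j (theta S) h = iter j sigma (alpha h).
  elim: j => [|[|j] IHj] // /andP[_ lt_j_k]; first by rewrite /= motion_in.
  rewrite iterS (IHj (ltnW lt_j_k)) /= motion_notin //.
  exact: (kmin j.+1).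
have iter_motion_k : iter k (theta S) h = iter k sigma (alpha h).
  by rewrite iter_motion // k0 leqnn.
exists k; rewrite iter_motion_k; split=> // j /andP[j0 lt_j_k].
by rewrite iter_motion ?j0 ?(ltnW lt_j_k) // kmin ?j0.
Qed.

Definition cyclic_motion S := forall x, fconnect (theta S) r x.

Lemma cyclic_motion_fconnect S :
  spanned alpha S -> cyclic_motion S -> forall x y, fconnect (theta S) x y.
Proof.
move=> sS cS x y; apply: connect_trans (cS y).
by rewrite (fconnect_sym (motion_inj sS)).
Qed.

Lemma motion_cyclic_covered S :
  spanned alpha S -> cyclic_motion S -> covered sigma alpha S.
Proof.
move=> sS cS; have cSxy := cyclic_motion_fconnect sS cS.
have phi_cycle : cyclic_on (phi_restr S) S.
  by move=> x y xS yS; rewrite (first_return_fconnect (motion_first_return sS)).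
split=> //.
- move=> x y xS yS; have /iter_findex <- := phi_cycle x y xS yS.
  elim: (findex _ x y) => [|n IHn]; first exact: connect0.
  rewrite iterS; apply: (connect_trans IHn); set z := iter n _ x.
  apply: (@connect_trans _ _ (restr alpha S z)); apply: connect1.
    by rewrite /= eqxx orbT.
  by rewrite /= eqxx.
- have [S0|[s s_in]] := set_0Vmem S.
    right; split=> // x y; rewrite -(@eq_fconnect _ (theta S)) //.
    by move=> z; rewrite motion_notin // S0 inE.
  left=> h; have /iter_findex hs := cSxy h s; rewrite -hs in s_in.
  have [j [jS Ej]] := iter_first_entry (@motion_notin S) s_in.
  by exists (iter j (theta S) h); rewrite // -Ej fconnect_iter.
Qed.

Lemma covered_motion_cyclic S : covered sigma alpha S -> cyclic_motion S.
Proof.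
case=> sS _ [meets | [S0 one]] phi_cycle; last first.
  move=> x; rewrite (@eq_fconnect _ _ sigma) //.
  by move=> z; rewrite motion_notin // S0 inE.
have theta_reaches_S s : s \in S -> fconnect (theta S) r s.
  have [s0 s0S /iter_findex rs0] := meets r; rewrite -rs0 in s0S.
  have sigma_theta x : x \notin S -> sigma x = theta S x.
    by move=> xS; rewrite motion_notin.
  have [j [s1S r_s1]] := iter_first_entry sigma_theta s0S.
  move=> s_in; apply: connect_trans (_ : fconnect _ r (iter j sigma r)) _.
    by rewrite -r_s1 fconnect_iter.
  rewrite -(first_return_fconnect (motion_first_return sS)) //; exact: phi_cycle.
move=> x; have [s s_in sx] := meets x.
rewrite (fconnect_sym (@perm_inj _ sigma)) in sx; rewrite -(iter_findex sx).
elim: (findex _ s x) => [|i IHi]; first exact: theta_reaches_S.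
rewrite iterS; set y := iter i sigma s.
have [yS|yS] := boolP (y \in S); last first.
  by rewrite -(motion_notin yS) (connect_trans IHi) ?fconnect1.
have ayS : alpha y \in S by rewrite mem_alpha_spanned.
rewrite -[y in sigma y]alphaK -(motion_in ayS).
exact: connect_trans (theta_reaches_S _ ayS) (fconnect1 _ _).
Qed.

Lemma coveredE S : covered sigma alpha S <-> spanned alpha S /\ cyclic_motion S.
Proof.
split=> [cS|[]]; last exact: motion_cyclic_covered.
by split; [case: cS | exact: covered_motion_cyclic].
Qed.

Lemma left_path_rcons IO s b :
  left_path sigma alpha r IO s -> b \in IO.1 ->
  (exists q, 0 < q /\ iter q sigma (alpha b) = last r s /\
     forall p, p < q -> iter p sigma (alpha b) \in IO.2) ->
  left_path sigma alpha r IO (rcons s b).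
Proof.
case=> s_in s_path bI b_step; split=> [x|j].
  by rewrite mem_rcons inE => /predU1P[->|/s_in].
rewrite size_rcons ltnS leq_eqVlt -rcons_cons => /predU1P[->|lt_js].
  by rewrite !nth_rcons ltnn eqxx /= ltnSn (nth_last r (r :: s)).
by rewrite !nth_rcons /= lt_js ltnS ltnW //; apply: s_path.
Qed.

Hypothesis alpha_fp : forall h, alpha h != h.

Section Position.
Variable S : {set H}.
Hypotheses (sS : spanned alpha S) (cS : cyclic_motion S).
Local Notation I := (Delta sigma alpha r S).1.

Definition pos x := findex (theta S) r x.

Lemma order_motion : fingraph.order (theta S) r = #|H|.
Proof.
apply/eqP; rewrite eqn_leq max_card /=.
by apply: subset_leq_card; apply/subsetP => x _; exact: cS.
Qed.

Lemma pos_lt x : pos x < #|H|.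
Proof. by rewrite -order_motion findex_max. Qed.

Lemma iter_pos x : iter (pos x) (theta S) r = x.
Proof. exact: iter_findex. Qed.

Lemma pos_iter k : k < #|H| -> pos (iter k (theta S) r) = k.
Proof. by rewrite -order_motion; apply: findex_iter. Qed.

Lemma pos_inj : injective pos.
Proof. by move=> x y exy; rewrite -(iter_pos x) exy iter_pos. Qed.

Lemma pos_motion y : theta S y != r -> pos (theta S y) = (pos y).+1.
Proof.
rewrite -[y in theta S y]iter_pos -iterS => ne_r.
have [lt_H|] := ltnP (pos y).+1 #|H|; first exact: pos_iter.
move=> ge_H; have eq_H : (pos y).+1 = #|H|.
  by apply/eqP; rewrite eqn_leq ge_H pos_lt.
by move: ne_r; rewrite eq_H -order_motion (iter_order (motion_inj sS)) eqxx.
Qed.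

Lemma pos_alpha_neq x : pos (alpha x) != pos x.
Proof. by apply: contra (alpha_fp x) => /eqP/pos_inj ->. Qed.

Lemma mem_Delta x : (x \in I) = ((x \in S) == (pos (alpha x) < pos x)).
Proof.
rewrite inE /prec -/(pos x) -/(pos (alpha x)).
by case: (x \in S); case: ltngtP (pos_alpha_neq x).
Qed.

Lemma mem_Delta_alpha x : (alpha x \in I) = (x \notin I).
Proof.
rewrite !mem_Delta alphaK mem_alpha_spanned //.
by case: (x \in S); case: ltngtP (pos_alpha_neq x).
Qed.

Lemma Delta_oriented : oriented alpha (Delta sigma alpha r S).
Proof.
split=> //; apply/setP => x; rewrite in_setC -mem_Delta_alpha.
apply/imsetP/idP => [[y yI ->]|axI]; first by rewrite alphaK.
by exists (alpha x); rewrite ?alphaK.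
Qed.

Lemma mem_Delta_iter k x : k < #|H| -> iter k (theta S) r = x ->
  (x \in I) = ((x \in S) == (alpha x \in traject (theta S) r k)).
Proof.
move=> lt_k def_x; rewrite mem_Delta -def_x pos_iter // def_x; congr (_ == _).
apply/idP/trajectP => [lt_ax|[i lt_i ->]].
  by exists (pos (alpha x)); rewrite ?iter_pos.
by rewrite pos_iter // (ltn_trans lt_i).
Qed.

Definition last_visit x := maxn (pos x) (pos (alpha x)).

Lemma last_visit_lt x : last_visit x < #|H|.
Proof. by rewrite gtn_max !pos_lt. Qed.

Lemma pos_sigma_notin w :
  w \notin I -> sigma w != r -> pos (sigma w) = (last_visit w).+1.
Proof.
rewrite mem_Delta /last_visit; have [wS|wS] := boolP (w \in S) => /= wO ne_r.
  have E : sigma w = theta S (alpha w).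
    by rewrite motion_in ?mem_alpha_spanned ?alphaK.
  rewrite E pos_motion -?E //; congr _.+1; apply/esym/maxn_idPr.
  by rewrite leqNgt.
have E : sigma w = theta S w by rewrite motion_notin.
rewrite E pos_motion -?E //; congr _.+1; apply/esym/maxn_idPl.
by rewrite ltnW // -[_ < _]negbK.
Qed.

Lemma last_visit_orbit h i : h \in I ->
  (forall j, 0 < j < i -> iter j sigma (alpha h) \notin I) ->
  (forall j, 0 < j <= i -> iter j sigma (alpha h) != r) ->
  last_visit h + i <= last_visit (iter i sigma (alpha h)).
Proof.
move=> hI; elim: i => [|i IHi] notI ne_r.
  by rewrite addn0 /last_visit alphaK maxnC.
have yi_notin : iter i sigma (alpha h) \notin I.
  case: i {IHi ne_r} notI => [_|i notI]; last by apply: notI; rewrite /= ltnSn.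
  by rewrite /= mem_Delta_alpha hI.
have yi_ne_r : sigma (iter i sigma (alpha h)) != r.
  by apply: (ne_r i.+1); rewrite /= leqnn.
apply: leq_trans (leq_maxl _ _); rewrite iterS pos_sigma_notin // addnS ltnS.
apply: IHi => j /andP[j0 lt_j].
  by apply: notI; rewrite j0 ltnW.
by apply: ne_r; rewrite j0 leqW.
Qed.

Lemma left_step h : h \in I -> exists2 q, 0 < q &
  (forall p, p < q -> iter p sigma (alpha h) \notin I) /\
  (iter q sigma (alpha h) = r \/
   iter q sigma (alpha h) \in I /\
   last_visit h < last_visit (iter q sigma (alpha h))).
Proof.
move=> hI; set y := fun j => iter j sigma (alpha h).
pose stop j := (0 < j) && ((y j \in I) || (y j == r)).
have [|q /andP[q0 stop_q] q_min] := ex_minnP (_ : exists q, stop q).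
  (* Otherwise last_visit would exceed #|H| along the orbit. *)
  have [/hasP[q _ ?]|no_stop] := boolP (has stop (iota 1 #|H|)).
    by exists q.
  have notI_r j : 0 < j -> j <= #|H| -> (y j \notin I) && (y j != r).
    move=> j0 jH; rewrite -negb_or; apply: contra no_stop => stop_j.
    by apply/hasP; exists j; rewrite ?mem_iota ?add1n ?ltnS ?j0 // /stop j0.
  have le_H : last_visit h + #|H| <= last_visit (y #|H|).
    apply: last_visit_orbit hI _ _ => j /andP[j0 jH].
      by case/andP: (notI_r j j0 (ltnW jH)).
    by case/andP: (notI_r j j0 jH).
  by have := leq_ltn_trans le_H (last_visit_lt _); rewrite ltnNge leq_addl.
have before_q j : 0 < j -> j < q -> (y j \notin I) && (y j != r).
  move=> j0 lt_jq; rewrite -negb_or; apply: contraL lt_jq => stop_j.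
  by rewrite -leqNgt q_min // /stop j0.
have y_notin p : p < q -> y p \notin I.
  case: p => [_|p lt_pq]; first by rewrite /y /= mem_Delta_alpha hI.
  by case/andP: (before_q p.+1 isT lt_pq).
exists q => //; split=> //.
have [yq_r|ne_r] := eqVneq (y q) r; [by left | right].
have yqI : y q \in I by move: stop_q; rewrite (negbTE ne_r) orbF.
split=> //; apply: leq_trans (last_visit_orbit hI _ _).
- by rewrite -addn1 leq_add2l.
- by move=> j /andP[_ /y_notin].
move=> j /andP[j0]; rewrite leq_eqVlt => /predU1P[->|lt_jq] //.
by case/andP: (before_q j j0 lt_jq).
Qed.

Lemma left_connected_Delta : left_connected sigma alpha r (Delta sigma alpha r S).
Proof.
suff lp_to n h : #|H| - last_visit h <= n -> h \in I ->
    exists s, [/\ s <> [::], left_path sigma alpha r (Delta sigma alpha r S) s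
                & last r s = h].
  by move=> h; apply: lp_to.
elim: n h => [|n IHn] h le_n hI.
  by move: le_n; rewrite leqn0 subn_eq0 leqNgt last_visit_lt.
have [q q0 [O_before [yq_r|[yqI lt_lv]]]] := left_step hI.
  exists [:: h]; split=> //; split=> [x|[|//] _]; first by rewrite inE => /eqP->.
  by exists q; split=> //; split=> // p /O_before; rewrite /= in_setC.
have [|s [s_nil lp_s last_s]] := IHn _ _ yqI.
  by rewrite -ltnS (leq_trans _ le_n) // ltn_sub2l ?last_visit_lt.
exists (rcons s h); split; last by rewrite last_rcons.
  by case: s {lp_s last_s s_nil}.
apply: left_path_rcons => //; exists q; split=> //.
split; first by rewrite last_s.
by move=> p /O_before; rewrite /= in_setC.
Qed.

End Position.

Lemma Delta_inj S1 S2 : cyclic_motion S1 -> cyclic_motion S2 ->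
  Delta sigma alpha r S1 = Delta sigma alpha r S2 -> S1 = S2.
Proof.
move=> cS1 cS2 eqD.
have same_mem k : k < #|H| -> traject (theta S1) r k = traject (theta S2) r k ->
    iter k (theta S1) r = iter k (theta S2) r ->
  (iter k (theta S1) r \in S1) = (iter k (theta S1) r \in S2).
  move=> lt_k tr_k it_k.
  have := mem_Delta_iter cS2 lt_k (esym it_k).
  have := mem_Delta_iter cS1 lt_k (erefl _).
  rewrite -tr_k eqD => ->.
  by case: (_ \in S1); case: (_ \in S2); case: (_ \in traject _ _ _).
have same_prefix k : k <= #|H| ->
    traject (theta S1) r k = traject (theta S2) r k /\
    iter k (theta S1) r = iter k (theta S2) r.
  elim: k => [|k IHk] lt_k //; have [tr_k it_k] := IHk (ltnW lt_k).
  split; first by rewrite !trajectSr tr_k it_k.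
  by rewrite !iterS -it_k /motion same_mem.
apply/setP => x; have lt_x := pos_lt cS1 x.
have [tr_x it_x] := same_prefix _ (ltnW lt_x).
by rewrite -(iter_pos cS1 x) same_mem.
Qed.

Section Walk.
Variable I : {set H}.
Hypothesis orient : forall x, (alpha x \in I) = (x \notin I).

Definition walk_step (st : H * {set H}) : H * {set H} :=
  let x := st.1 in
  (if (alpha x \in st.2) == (x \in I) then sigma (alpha x) else sigma x,
   x |: st.2).

Definition walk k := iter k walk_step (r, set0).
Definition walk_pt k := (walk k).1.
Definition visited k := (walk k).2.
Definition walk_in k := (alpha (walk_pt k) \in visited k) == (walk_pt k \in I).

Lemma walk_ptS k : walk_pt k.+1 =
  if walk_in k then sigma (alpha (walk_pt k)) else sigma (walk_pt k).
Proof. by []. Qed.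

Lemma visitedS k : visited k.+1 = walk_pt k |: visited k.
Proof. by []. Qed.

Lemma visitedP k y : reflect (exists2 j, j < k & walk_pt j = y) (y \in visited k).
Proof.
elim: k => [|k IHk]; first by rewrite inE; right; case.
rewrite visitedS in_setU1; apply: (iffP predU1P) => [[->|/IHk[j lt_jk <-]]|[j]].
- by exists k.
- by exists j; rewrite // ltnW.
rewrite ltnS leq_eqVlt => /predU1P[->|lt_jk] def_y; first by left.
by right; apply/IHk; exists j.
Qed.

Lemma walk_pt_visited j k : j < k -> walk_pt j \in visited k.
Proof. by move=> lt_jk; apply/visitedP; exists j. Qed.

Lemma card_visited n :
  (forall j, j < n -> walk_pt j \notin visited j) -> #|visited n| = n.
Proof.
elim: n => [|n IHn] fresh; first by rewrite cards0.
by rewrite visitedS cardsU1 fresh // IHn // => j lt_jn; rewrite fresh // ltnW.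
Qed.

Lemma walk_revisits : exists k, (0 < k) && (walk_pt k \in visited k).
Proof.
pose revisit (k : 'I_#|H|.+1) := (0 < k) && (walk_pt k \in visited k).
have [k revisit_k|none] := pickP revisit; first by exists k.
have := max_card (mem (visited #|H|.+1)); rewrite card_visited ?ltnn //.
case=> [|j] lt_j; first by rewrite inE.
by have := none (Ordinal lt_j); rewrite /revisit /= => /negbT.
Qed.

Section FirstRevisit.
Variable m : nat.
Hypotheses (m_gt0 : 0 < m) (revisit_m : walk_pt m \in visited m).
Hypothesis m_min : forall k, (0 < k) && (walk_pt k \in visited k) -> m <= k.

Lemma walk_fresh k : k < m -> walk_pt k \notin visited k.
Proof.
case: k => [|k] lt_km; first by rewrite inE.
by apply: contraTN lt_km => k_vis; rewrite -leqNgt m_min.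
Qed.

Lemma walk_pt_neq j k : j < k -> k < m -> walk_pt j != walk_pt k.
Proof.
move=> lt_jk lt_km; apply: contraNneq (walk_fresh lt_km) => <-.
exact: walk_pt_visited.
Qed.

Lemma walk_pt_inj j k : j < m -> k < m -> walk_pt j = walk_pt k -> j = k.
Proof.
move=> lt_jm lt_km eq_jk; case: (ltngtP j k) => // [lt_jk|lt_kj].
  by have := walk_pt_neq lt_jk lt_km; rewrite eq_jk eqxx.
by have := walk_pt_neq lt_kj lt_jm; rewrite eq_jk eqxx.
Qed.

Lemma mem_visited j k : j < m -> k < m -> (walk_pt j \in visited k) = (j < k).
Proof.
move=> lt_jm lt_km; apply/visitedP/idP => [[i lt_ik eq_ij]|]; last by exists j.
by rewrite -(walk_pt_inj (ltn_trans lt_ik lt_km) lt_jm eq_ij).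
Qed.

(* Fresh points with a common successor would be x and alpha x, which make the
   same decision. *)
Lemma walk_succ_neq i j : i < j -> j < m -> walk_pt i.+1 != walk_pt j.+1.
Proof.
move=> lt_ij lt_jm; have lt_im := ltn_trans lt_ij lt_jm.
have ne_ij := walk_pt_neq lt_ij lt_jm.
have same_in : walk_pt j = alpha (walk_pt i) -> walk_in i = walk_in j.
  move=> def_y; rewrite /walk_in def_y alphaK orient -def_y !mem_visited //.
  by rewrite lt_ij ltnNge ltnW.
rewrite !walk_ptS.
case in_i: (walk_in i); case in_j: (walk_in j); apply/eqP => /perm_inj E.
- by move: ne_ij; rewrite (perm_inj E) eqxx.
- by move: in_j; rewrite -same_in ?in_i.
- by move: in_i; rewrite same_in ?in_j // E alphaK.
- by move: ne_ij; rewrite E eqxx.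
Qed.

Lemma walk_returns : walk_pt m = r.
Proof.
have /visitedP[[|j] lt_jm eq_jm] := revisit_m; first by [].
have lt_m'm : m.-1 < m by rewrite ltn_predL.
have lt_jm' : j < m.-1 by rewrite -ltnS prednK.
by have := walk_succ_neq lt_jm' lt_m'm; rewrite prednK // eq_jm eqxx.
Qed.

Definition walk_set := [set walk_pt k | k : 'I_m & walk_in k].

Lemma mem_walk_set k : k < m -> (walk_pt k \in walk_set) = walk_in k.
Proof.
move=> lt_km; apply/imsetP/idP => [[j]|in_k].
  by rewrite inE => in_j eq_kj; rewrite (walk_pt_inj lt_km (ltn_ord j) eq_kj).
by exists (Ordinal lt_km); rewrite ?inE.
Qed.

Lemma iter_motion_walk k : k <= m -> iter k (theta walk_set) r = walk_pt k.
Proof.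
elim: k => // k IHk lt_km.
rewrite iterS IHk; last exact: ltnW.
by rewrite walk_ptS /motion mem_walk_set.
Qed.

Lemma visited_sigma y : sigma y \in visited m -> y \notin I ->
  (y \in visited m) && (alpha y \in visited m).
Proof.
move=> /visitedP[k lt_km eq_k] yO.
have [i lt_im eq_i] : exists2 i, i < m & walk_pt i.+1 = sigma y.
  case: k lt_km eq_k => [|k] lt_km eq_k; last by exists k; rewrite // ltnW.
  by exists m.-1; rewrite ?prednK ?ltn_predL // walk_returns.
have visited_i z : z \in visited i -> z \in visited m.
  by case/visitedP=> j lt_ji <-; rewrite walk_pt_visited // (ltn_trans lt_ji).
move: eq_i; rewrite walk_ptS /walk_in; case: ifP => in_i /perm_inj def_y.
  have x_i : walk_pt i = alpha y by rewrite -def_y alphaK.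
  rewrite -x_i walk_pt_visited // andbT visited_i //.
  by move: in_i; rewrite def_y x_i orient yO => /eqP.
rewrite -{1}def_y walk_pt_visited //= visited_i //.
by move: in_i; rewrite def_y (negbTE yO); case: (_ \in _).
Qed.

Lemma visited_iter_sigma q y :
  iter q.+1 sigma y \in visited m ->
  (forall p, p <= q -> iter p sigma y \notin I) ->
  (y \in visited m) && (alpha y \in visited m).
Proof.
elim: q y => [|q IHq] y y_vis yO; first exact: visited_sigma (yO 0 _).
have /andP[sy_vis _] : (sigma y \in visited m) && (alpha (sigma y) \in visited m).
  by apply: IHq => [|p le_pq]; rewrite -iterSr // yO.
exact: visited_sigma sy_vis (yO 0 _).
Qed.

Lemma left_path_visited s : left_path sigma alpha r (I, ~: I) s ->
  {in s, forall b, (b \in visited m) && (alpha b \in visited m)}.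
Proof.
case=> _ s_path.
have step j : j < size s -> nth r (r :: s) j \in visited m ->
    (nth r s j \in visited m) && (alpha (nth r s j) \in visited m).
  move=> lt_js prev_vis; have [q [q0 [def_prev O_before]]] := s_path j lt_js.
  rewrite -def_prev -(prednK q0) in prev_vis.
  rewrite andbC -{2}[nth r s j]alphaK.
  apply: visited_iter_sigma prev_vis _ => p le_pq.
  by have := O_before p; rewrite /= in_setC; apply; rewrite -(prednK q0) ltnS.
suff nth_visited j : j < size s ->
    (nth r s j \in visited m) && (alpha (nth r s j) \in visited m).
  by move=> b b_s; rewrite -(nth_index r b_s) nth_visited ?index_mem.
elim: j => [|j IHj] lt_js; apply: step => //=; first exact: walk_pt_visited m_gt0.
by case/andP: (IHj (ltnW lt_js)).
Qed.

Hypothesis lc : left_connected sigma alpha r (I, ~: I).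

Lemma visited_all y : y \in visited m.
Proof.
have ends h : h \in I -> (h \in visited m) && (alpha h \in visited m).
  case/lc=> s [s_nil lp_s last_s]; apply: (left_path_visited lp_s).
  by rewrite -last_s; case: s s_nil {lp_s last_s} => // x s _ /=; exact: mem_last.
have [/ends/andP[]//|yO] := boolP (y \in I).
have ayI : alpha y \in I by rewrite orient.
by have /andP[_] := ends _ ayI; rewrite alphaK.
Qed.

Lemma walk_length : m = #|H|.
Proof.
have all_visited : visited m = setT by apply/setP => y; rewrite inE visited_all.
by rewrite -cardsT -all_visited card_visited //; apply: walk_fresh.
Qed.

Lemma walk_onto y : exists2 k, k < m & walk_pt k = y.
Proof. exact/visitedP/visited_all. Qed.

Lemma walk_set_spanned : spanned alpha walk_set.
Proof.
move=> y; have [k lt_km <-] := walk_onto y.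
have [j lt_jm def_ay] := walk_onto (alpha (walk_pt k)).
rewrite -def_ay !mem_walk_set // /walk_in def_ay alphaK orient -def_ay.
rewrite !mem_visited //.
have ne_jk : j != k.
  by apply: contraNneq (alpha_fp (walk_pt k)) => eq_jk; rewrite -def_ay eq_jk.
rewrite [k < j]ltnNge [j <= k]leq_eqVlt (negbTE ne_jk) /=.
by case: (_ \in I); case: (j < k).
Qed.

Lemma walk_set_cyclic : cyclic_motion walk_set.
Proof.
move=> y; have [k lt_km <-] := walk_onto y.
by rewrite -iter_motion_walk ?fconnect_iter // ltnW.
Qed.

Lemma Delta_walk_set : Delta sigma alpha r walk_set = (I, ~: I).
Proof.
have cS := walk_set_cyclic.
have pos_walk i : i < m -> pos walk_set (walk_pt i) = i.
  move=> lt_im; rewrite -iter_motion_walk ?(ltnW lt_im) //.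
  by rewrite pos_iter // -walk_length.
suff D1 : (Delta sigma alpha r walk_set).1 = I by rewrite -D1.
apply/setP => y; have [k lt_km <-] := walk_onto y.
have [j lt_jm def_ay] := walk_onto (alpha (walk_pt k)).
rewrite (mem_Delta cS) -def_ay !pos_walk // mem_walk_set // /walk_in -def_ay.
rewrite mem_visited //.
by case: (j < k); case: (_ \in I).
Qed.

End FirstRevisit.
End Walk.

Lemma Delta_surj IO : oriented alpha IO -> left_connected sigma alpha r IO ->
  exists2 S, covered sigma alpha S & Delta sigma alpha r S = IO.
Proof.
case: IO => I O [/= -> img] lc.
have orient x : (alpha x \in I) = (x \notin I).
  rewrite -in_setC -img; apply/idP/imsetP => [axI|[y yI ->]].
    by exists (alpha x); rewrite ?alphaK.
  by rewrite alphaK.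
have [m /andP[m_gt0 revisit_m] m_min] := ex_minnP (walk_revisits I).
exists (walk_set I m); last exact: Delta_walk_set.
apply: motion_cyclic_covered; first exact: walk_set_spanned lc.
exact: walk_set_cyclic lc.
Qed.

End Motion.

Theorem mainTheorem2 (H : finType) (sigma alpha : {perm H}) (r : H) :
  is_map sigma alpha ->
  [/\ (forall S : {set H}, covered sigma alpha S ->
         oriented alpha (Delta sigma alpha r S) /\
         left_connected sigma alpha r (Delta sigma alpha r S)),
      (forall S1 S2 : {set H}, covered sigma alpha S1 -> covered sigma alpha S2 ->
         Delta sigma alpha r S1 = Delta sigma alpha r S2 -> S1 = S2) &
      (forall IO : {set H} * {set H}, oriented alpha IO ->
         left_connected sigma alpha r IO ->
         exists2 S, covered sigma alpha S & Delta sigma alpha r S = IO)].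
Proof.
case=> alpha_fp [alphaK _]; have coveredE := coveredE sigma r alphaK.
split.
- move=> S /coveredE[sS cS].
  by split; [apply: Delta_oriented | apply: left_connected_Delta].
- by move=> S1 S2 /coveredE[_ cS1] /coveredE[_ cS2]; apply: Delta_inj.
- by move=> IO; apply: Delta_surj.
Qed.
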